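(* For integers $r,k\ge0$ and real $\alpha$ with $\alpha>k>r$, $$\sum_{n=1}^\infty\frac{H_{n+\alpha}^2}{(n+r)(n+k)}=\frac1{k-r}\Bigg\{H_{\alpha-r}^3+H_{\alpha-r}H_{\alpha-r}^{(2)}+H_{\alpha-r}\zeta(2)-H_{\alpha-k}^3-H_{\alpha-k}H_{\alpha-k}^{(2)}-H_{\alpha-k}\zeta(2)$$ $$+(r-\alpha)\sum_{j=1}^r\frac{H_{\alpha+j-r}^2}{j(\alpha+j-r)}+\sum_{j=1}^{k-r}\frac{H_{\alpha+j-k}}{(\alpha+j-k)^2}-(k-\alpha)\sum_{j=1}^k\frac{H_{\alpha+j-k}^2}{j(\alpha+j-k)}\Bigg\}.$$
   Context: Shifted harmonic numbers: for a real $\alpha$ that is not a negative integer, $H_\alpha := \sum_{k=1}^\infty\left(\frac1k-\frac1{k+\alpha}\right)$ and, for integers $m\ge 2$, $H_\alpha^{(m)} := \sum_{k=1}^\infty\left(\frac1{k^m}-\frac1{(k+\alpha)^m}\right)=\zeta(m)-\zeta(m,\alpha+1)$, where $\zeta$ is the Riemann zeta function and $\zeta(s,\alpha+1)=\sum_{n=1}^\infty (n+\alpha)^{-s}$ is the Hurwitz zeta function. Powers such as $H_\alpha^2$ mean $(H_\alpha)^2$. Empty sums are $0$. *)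

From Stdlib Require Import Reals Lra Lia ClassicalEpsilon.
Open Scope R_scope.

(* The sum of a series sum_{k>=0} f k: the limit of the partial sums, chosen by
   Hilbert's epsilon (it is the unique limit whenever the series converges). *)
Definition series (f : nat -> R) : R :=
  epsilon (inhabits 0) (fun l => infinite_sum f l).

Definition H (a : R) : R :=
  series (fun k => / INR (S k) - / (INR (S k) + a)).

Definition Hm (m : nat) (a : R) : R :=
  series (fun k => / (INR (S k)) ^ m - / (INR (S k) + a) ^ m).

Definition zeta (m : nat) : R := series (fun k => / (INR (S k)) ^ m).

Fixpoint fsum1 (n : nat) (f : nat -> R) : R :=
  match n with
  | O => 0
  | S p => fsum1 p f + f (S p)
  end.

From Stdlib Require Import Reals Lra Lia ClassicalEpsilon.
From Coquelicot Require Import Coquelicot.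
Open Scope R_scope.

(* Let [S_p(x) = sum_{m>=1} H_{m+x}^p (1/m - 1/(m+x))] ([Hpow_sum p x]). By partial fractions the series is
   [(S_2(alpha-r) - S_2(alpha-k))/(k-r)] up to finitely many terms. Comparing partial sums with
   the shift rule [H_{x+1} = H_x + 1/(x+1)] gives
     [S_2(x+1) - S_2(x) = phi(x+1) - phi(x) + H_{x+1}/(x+1)^2],  [phi = H^3 + H H^(2) + zeta(2) H],
   provided [S_1(x) = H_x^2 + H_x^(2)]; telescoping over the [k - r] unit steps from [alpha - k]
   to [alpha - r] gives the formula. All series converge because [H_z = O(z^(1/4))] makes
   their terms [O(m^(-3/2))]. *)

Lemma series_unique (f : nat -> R) (l : R) : infinite_sum f l -> series f = l.
Proof.
  intro Hf; unfold series.
  exact (uniqueness_sum _ _ _ (epsilon_spec (inhabits 0) _ (ex_intro _ l Hf)) Hf).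
Qed.

Lemma is_lim_seq_eq (u : nat -> R) (l1 l2 : R) :
  is_lim_seq u l1 -> is_lim_seq u l2 -> l1 = l2.
Proof.
  intros H1 H2; apply is_lim_seq_unique in H1, H2.
  rewrite H1 in H2; now injection H2.
Qed.

Lemma INR_pos_of_ge1 (m : nat) : (1 <= m)%nat -> 0 < INR m.
Proof. intro; apply lt_0_INR; lia. Qed.

Lemma fsum1_S (n : nat) (f : nat -> R) : fsum1 (S n) f = fsum1 n f + f (S n).
Proof. reflexivity. Qed.

Lemma fsum1_ext (f g : nat -> R) (n : nat) :
  (forall m, (1 <= m)%nat -> f m = g m) -> fsum1 n f = fsum1 n g.
Proof. intro Hfg; induction n; simpl; [lra|]. rewrite IHn, Hfg; [reflexivity|lia]. Qed.

Lemma fsum1_le (f g : nat -> R) (n : nat) :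
  (forall m, (1 <= m)%nat -> f m <= g m) -> fsum1 n f <= fsum1 n g.
Proof. intro Hfg; induction n; simpl; [lra|]. specialize (Hfg (S n) ltac:(lia)); lra. Qed.

Lemma fsum1_scal_l (c : R) (f : nat -> R) (n : nat) :
  fsum1 n (fun m => c * f m) = c * fsum1 n f.
Proof. induction n; simpl; [ring|]. rewrite IHn; ring. Qed.

Lemma fsum1_plus (f g : nat -> R) (n : nat) :
  fsum1 n (fun m => f m + g m) = fsum1 n f + fsum1 n g.
Proof. induction n; simpl; [ring|]. rewrite IHn; ring. Qed.

Lemma fsum1_minus (f g : nat -> R) (n : nat) :
  fsum1 n (fun m => f m - g m) = fsum1 n f - fsum1 n g.
Proof. induction n; simpl; [ring|]. rewrite IHn; ring. Qed.

(* Convergence of [f 1 + f 2 + ...]. *)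
Definition is_sum1 (f : nat -> R) (l : R) : Prop := is_lim_seq (fun n => fsum1 n f) l.

Lemma is_sum1_infinite_sum (f : nat -> R) (l : R) :
  is_sum1 f l -> infinite_sum (fun k => f (S k)) l.
Proof.
  intro Hf; apply is_lim_seq_Reals.
  apply is_lim_seq_incr_1 in Hf; eapply is_lim_seq_ext; [|exact Hf].
  intro n; simpl; induction n; simpl; [ring|]. now rewrite IHn.
Qed.

Lemma is_sum1_series (f : nat -> R) (l : R) :
  is_sum1 f l -> series (fun k => f (S k)) = l.
Proof. intro Hf; apply series_unique, is_sum1_infinite_sum, Hf. Qed.

Lemma ex_sum1_bounded (f : nat -> R) (B : R) :
  (forall m, (1 <= m)%nat -> 0 <= f m) -> (forall n, fsum1 n f <= B) ->
  exists l, is_sum1 f l.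
Proof.
  intros Hf HB.
  destruct (growing_cv (fun n => fsum1 n f)) as [l Hl].
  - intro n; simpl; specialize (Hf (S n) ltac:(lia)); lra.
  - exists B; intros x [n ->]; apply HB.
  - exists l; now apply is_lim_seq_Reals.
Qed.

Lemma ex_sum1_le (f g : nat -> R) (C B : R) :
  0 <= C -> (forall m, (1 <= m)%nat -> 0 <= f m <= C * g m) ->
  (forall n, fsum1 n g <= B) -> exists l, is_sum1 f l.
Proof.
  intros HC Hfg HB; apply (ex_sum1_bounded f (C * B)); [apply Hfg|].
  intro n; apply Rle_trans with (fsum1 n (fun m => C * g m)).
  - apply fsum1_le, Hfg.
  - rewrite fsum1_scal_l; apply Rmult_le_compat_l; auto.
Qed.

Lemma fsum1_le_is_sum1 (f : nat -> R) (l : R) (n : nat) :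
  (forall m, (1 <= m)%nat -> 0 <= f m) -> is_sum1 f l -> fsum1 n f <= l.
Proof.
  intros Hf Hl; change (Rbar_le (fsum1 n f) l).
  apply (is_lim_seq_le (fun _ => fsum1 n f) (fun M => fsum1 (M + n) f));
    [|apply is_lim_seq_const|now apply (is_lim_seq_incr_n (fun M => fsum1 M f))].
  intro M; induction M; simpl; [lra|]. specialize (Hf (S (M + n)) ltac:(lia)); lra.
Qed.

Lemma is_sum1_le (f g : nat -> R) (l1 l2 : R) :
  (forall m, (1 <= m)%nat -> f m <= g m) -> is_sum1 f l1 -> is_sum1 g l2 -> l1 <= l2.
Proof. intros Hfg H1 H2; exact (is_lim_seq_le _ _ _ _ (fun n => fsum1_le f g n Hfg) H1 H2). Qed.

Lemma fsum1_inv_sq_le (n : nat) : fsum1 n (fun m => / INR m ^ 2) <= 2.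
Proof.
  assert (Htel : forall n, (1 <= n)%nat -> fsum1 n (fun m => / INR m ^ 2) <= 2 - / INR n).
  { induction n0 as [|[|n0] IH]; intro Hn; [lia|simpl; lra|].
    specialize (IH ltac:(lia)); rewrite fsum1_S, (S_INR (S n0)).
    set (x := INR (S n0)) in *.
    assert (1 <= x) by (apply (le_INR 1); lia).
    assert (/ (x + 1) ^ 2 <= / x - / (x + 1)).
    { apply (Rmult_le_reg_r (x * (x + 1) ^ 2)); [nra|]. field_simplify; lra. }
    lra. }
  destruct n; [simpl; lra|].
  specialize (Htel (S n) ltac:(lia)).
  assert (0 < / INR (S n)) by (apply Rinv_0_lt_compat, lt_0_INR; lia). lra.
Qed.

(* The mean value inequality for [2 / sqrt] between [a^2] and [b^2 = a^2 + 1]. *)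
Lemma inv_cube_le_inv_sub (a b : R) :
  1 <= a <= b -> a * a + 1 = b * b -> / (b * b * b) <= 2 / a - 2 / b.
Proof.
  intros [Ha Hb] E.
  assert (0 < a * b) by nra.
  replace (2 / a - 2 / b) with (2 * (b - a) / (a * b)) by (field; lra).
  apply (Rmult_le_reg_r (b * b * b * (a * b))); [repeat apply Rmult_lt_0_compat; lra|].
  field_simplify; try lra.
  assert ((b - a) * (a + b) = 1) by nra.
  assert (a * b * (a + b) <= 2 * (b * b * b)) by nra.
  nra.
Qed.

Lemma fsum1_inv_pow32_le (n : nat) : fsum1 n (fun m => / (INR m * sqrt (INR m))) <= 3.
Proof.
  assert (Htel : forall n, (1 <= n)%nat ->
            fsum1 n (fun m => / (INR m * sqrt (INR m))) <= 3 - 2 / sqrt (INR n)).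
  { induction n0 as [|[|n0] IH]; intro Hn; [lia|simpl; rewrite Rplus_0_l, sqrt_1; lra|].
    specialize (IH ltac:(lia)); rewrite fsum1_S, (S_INR (S n0)).
    set (x := INR (S n0)) in *.
    assert (1 <= x) by (apply (le_INR 1); lia).
    assert (Ha : 1 <= sqrt x) by (rewrite <- sqrt_1; apply sqrt_le_1_alt; lra).
    assert (Hab : sqrt x <= sqrt (x + 1)) by (apply sqrt_le_1_alt; lra).
    assert (Ea : sqrt x * sqrt x = x) by (apply sqrt_sqrt; lra).
    assert (Eb : sqrt (x + 1) * sqrt (x + 1) = x + 1) by (apply sqrt_sqrt; lra).
    set (a := sqrt x) in *; set (b := sqrt (x + 1)) in *.
    assert (/ ((x + 1) * b) <= 2 / a - 2 / b).
    { rewrite <- Eb; apply inv_cube_le_inv_sub; lra. }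
    lra. }
  destruct n; [simpl; lra|].
  specialize (Htel (S n) ltac:(lia)).
  assert (0 < 2 / sqrt (INR (S n))).
  { apply Rdiv_lt_0_compat; [lra|]. apply sqrt_lt_R0, lt_0_INR; lia. }
  lra.
Qed.

Lemma is_lim_seq_inv_shift (c : R) : 0 < c -> is_lim_seq (fun n => / (INR n + c)) 0.
Proof.
  intro Hc; change (Finite 0) with (Rbar_inv p_infty).
  apply is_lim_seq_inv; [|discriminate].
  apply (is_lim_seq_le_p_loc INR); [|apply is_lim_seq_INR].
  exists O; intros; lra.
Qed.

Lemma is_lim_seq_inv_sqrt_shift (c : R) : 0 < c -> is_lim_seq (fun n => / sqrt (INR n + c)) 0.
Proof.
  intro Hc; change (Finite 0) with (Rbar_inv p_infty).
  apply is_lim_seq_inv; [|discriminate].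
  apply is_lim_seq_spec; intro K.
  destruct (INR_archimed 1 (K * K)) as [N HN]; [lra|].
  exists N; intros n Hn; apply le_INR in Hn.
  assert (Pn := pos_INR n).
  destruct (Rle_or_lt K 0).
  - assert (0 < sqrt (INR n + c)) by (apply sqrt_lt_R0; lra). lra.
  - rewrite <- (sqrt_square K) by lra. apply sqrt_lt_1_alt; split; nra.
Qed.

Definition harm_term (a : R) (m : nat) : R := / INR m - / (INR m + a).

Definition harm2_term (a : R) (m : nat) : R := / INR m ^ 2 - / (INR m + a) ^ 2.

Lemma harm_term_bounds (a : R) (m : nat) :
  0 <= a -> (1 <= m)%nat -> 0 <= harm_term a m <= a * / INR m ^ 2.
Proof.
  intros Ha Hm; unfold harm_term.
  assert (P := INR_pos_of_ge1 m Hm); set (x := INR m) in *.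
  replace (/ x - / (x + a)) with (a / (x * (x + a))) by (field; lra).
  split.
  - apply Rdiv_le_0_compat; nra.
  - apply Rmult_le_compat_l; [lra|]. apply Rinv_le_contravar; nra.
Qed.

Lemma harm2_term_bounds (a : R) (m : nat) :
  0 <= a -> (1 <= m)%nat -> 0 <= harm2_term a m <= 1 * / INR m ^ 2.
Proof.
  intros Ha Hm; unfold harm2_term.
  assert (P := INR_pos_of_ge1 m Hm); set (x := INR m) in *.
  assert (/ (x + a) ^ 2 <= / x ^ 2) by (apply Rinv_le_contravar; nra).
  assert (0 < / (x + a) ^ 2) by (apply Rinv_0_lt_compat; nra).
  lra.
Qed.

Lemma H_is_sum1 (a : R) : 0 <= a -> is_sum1 (harm_term a) (H a).
Proof.
  intro Ha.
  destruct (ex_sum1_le (harm_term a) (fun m => / INR m ^ 2) a 2) as [l Hl];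
    auto using harm_term_bounds, fsum1_inv_sq_le.
  replace (H a) with l; [exact Hl|symmetry; exact (is_sum1_series _ _ Hl)].
Qed.

Lemma Hm2_is_sum1 (a : R) : 0 <= a -> is_sum1 (harm2_term a) (Hm 2 a).
Proof.
  intro Ha.
  destruct (ex_sum1_le (harm2_term a) (fun m => / INR m ^ 2) 1 2) as [l Hl];
    auto using harm2_term_bounds, fsum1_inv_sq_le; [lra|].
  replace (Hm 2 a) with l; [exact Hl|symmetry; exact (is_sum1_series _ _ Hl)].
Qed.

Lemma zeta2_is_sum1 : is_sum1 (fun m => / INR m ^ 2) (zeta 2).
Proof.
  destruct (ex_sum1_le (fun m => / INR m ^ 2) (fun m => / INR m ^ 2) 1 2) as [l Hl];
    auto using fsum1_inv_sq_le; [lra| |].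
  - intros m Hm; split; [|lra].
    left; apply Rinv_0_lt_compat, pow_lt, INR_pos_of_ge1, Hm.
  - replace (zeta 2) with l; [exact Hl|symmetry; exact (is_sum1_series _ _ Hl)].
Qed.

Lemma inv_sq_shift_is_sum1 (a : R) :
  0 <= a -> is_sum1 (fun m => / (INR m + a) ^ 2) (zeta 2 - Hm 2 a).
Proof.
  intro Ha; unfold is_sum1.
  apply (is_lim_seq_ext (fun n => fsum1 n (fun m => / INR m ^ 2) - fsum1 n (harm2_term a))).
  - intro n; rewrite <- fsum1_minus; apply fsum1_ext; intros m _.
    unfold harm2_term; ring.
  - apply is_lim_seq_minus'; [apply zeta2_is_sum1|apply Hm2_is_sum1, Ha].
Qed.

Lemma H_0 : H 0 = 0.
Proof.
  apply (is_lim_seq_eq (fun n => fsum1 n (harm_term 0))); [apply H_is_sum1; lra|].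
  eapply is_lim_seq_ext; [|apply is_lim_seq_const].
  intro n; induction n; simpl; [reflexivity|].
  rewrite <- IHn; unfold harm_term; rewrite Rplus_0_r; ring.
Qed.

Lemma Hm2_0 : Hm 2 0 = 0.
Proof.
  apply (is_lim_seq_eq (fun n => fsum1 n (harm2_term 0))); [apply Hm2_is_sum1; lra|].
  eapply is_lim_seq_ext; [|apply is_lim_seq_const].
  intro n; induction n; simpl; [reflexivity|].
  rewrite <- IHn; unfold harm2_term; rewrite Rplus_0_r; ring.
Qed.

Lemma H_add1 (a : R) : 0 <= a -> H (a + 1) = H a + / (a + 1).
Proof.
  intro Ha.
  assert (Hpart : forall n, fsum1 n (harm_term (a + 1)) =
                            fsum1 n (harm_term a) + (/ (a + 1) - / (INR n + (a + 1)))).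
  { induction n; simpl fsum1; [simpl; field; lra|].
    rewrite IHn; unfold harm_term; rewrite S_INR.
    assert (Pn : 0 <= INR n) by apply pos_INR. field; repeat split; lra. }
  apply (is_lim_seq_eq (fun n => fsum1 n (harm_term (a + 1)))); [apply H_is_sum1; lra|].
  eapply is_lim_seq_ext; [intro n; symmetry; apply Hpart|].
  replace (H a + / (a + 1)) with (H a + (/ (a + 1) - 0)) by ring.
  apply is_lim_seq_plus'; [apply H_is_sum1, Ha|].
  apply is_lim_seq_minus'; [apply is_lim_seq_const|apply is_lim_seq_inv_shift; lra].
Qed.

Lemma Hm2_add1 (a : R) : 0 <= a -> Hm 2 (a + 1) = Hm 2 a + / (a + 1) ^ 2.
Proof.
  intro Ha.
  assert (Hpart : forall n, fsum1 n (harm2_term (a + 1)) =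
    fsum1 n (harm2_term a) + (/ (a + 1) ^ 2 - / (INR n + (a + 1)) * / (INR n + (a + 1)))).
  { induction n; simpl fsum1; [simpl; field; lra|].
    rewrite IHn; unfold harm2_term; rewrite S_INR.
    assert (Pn : 0 <= INR n) by apply pos_INR. field; repeat split; lra. }
  apply (is_lim_seq_eq (fun n => fsum1 n (harm2_term (a + 1)))); [apply Hm2_is_sum1; lra|].
  eapply is_lim_seq_ext; [intro n; symmetry; apply Hpart|].
  replace (Hm 2 a + / (a + 1) ^ 2) with (Hm 2 a + (/ (a + 1) ^ 2 - 0 * 0)) by ring.
  apply is_lim_seq_plus'; [apply Hm2_is_sum1, Ha|].
  apply is_lim_seq_minus'; [apply is_lim_seq_const|].
  apply is_lim_seq_mult'; apply is_lim_seq_inv_shift; lra.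
Qed.

Lemma H_nonneg (a : R) : 0 <= a -> 0 <= H a.
Proof.
  intro Ha; apply (fsum1_le_is_sum1 (harm_term a) (H a) 0); [|apply H_is_sum1, Ha].
  intros; apply harm_term_bounds; auto.
Qed.

Lemma H_le (a b : R) : 0 <= a <= b -> H a <= H b.
Proof.
  intro Hab; apply (is_sum1_le (harm_term a) (harm_term b)); try (apply H_is_sum1; lra).
  intros m Hm; unfold harm_term; assert (P := INR_pos_of_ge1 m Hm).
  assert (/ (INR m + b) <= / (INR m + a)) by (apply Rinv_le_contravar; lra). lra.
Qed.

Lemma Hm2_le (a b : R) : 0 <= a <= b -> Hm 2 a <= Hm 2 b.
Proof.
  intro Hab; apply (is_sum1_le (harm2_term a) (harm2_term b)); try (apply Hm2_is_sum1; lra).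
  intros m Hm; unfold harm2_term; assert (P := INR_pos_of_ge1 m Hm).
  assert (/ (INR m + b) ^ 2 <= / (INR m + a) ^ 2) by (apply Rinv_le_contravar; nra). lra.
Qed.

Lemma inv_le_fourth_root_sub (x : R) :
  0 <= x -> / (x + 1) <= 4 * (sqrt (sqrt (x + 1)) - sqrt (sqrt x)).
Proof.
  intro Hx.
  assert (Ea : sqrt (sqrt (x + 1)) * sqrt (sqrt (x + 1)) = sqrt (x + 1))
    by (apply sqrt_sqrt, sqrt_pos).
  assert (Ea' : sqrt (x + 1) * sqrt (x + 1) = x + 1) by (apply sqrt_sqrt; lra).
  assert (Eb : sqrt (sqrt x) * sqrt (sqrt x) = sqrt x) by (apply sqrt_sqrt, sqrt_pos).
  assert (Eb' : sqrt x * sqrt x = x) by (apply sqrt_sqrt; lra).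
  assert (A1 : 1 <= sqrt (x + 1))
    by (rewrite <- sqrt_1 at 1; apply sqrt_le_1_alt; lra).
  assert (A2 : 1 <= sqrt (sqrt (x + 1)))
    by (rewrite <- sqrt_1 at 1; apply sqrt_le_1_alt; lra).
  assert (B1 : sqrt x <= sqrt (x + 1)) by (apply sqrt_le_1_alt; lra).
  assert (B2 : sqrt (sqrt x) <= sqrt (sqrt (x + 1))) by (apply sqrt_le_1_alt; lra).
  assert (B0 : 0 <= sqrt (sqrt x)) by apply sqrt_pos.
  set (a := sqrt (sqrt (x + 1))) in *; set (b := sqrt (sqrt x)) in *.
  set (s := sqrt (x + 1)) in *; set (t := sqrt x) in *.
  (* [x + 1 - x = (a - b) (a + b) (s + t)] with [a, b] the fourth roots and [s, t] the square roots. *)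
  assert (F : (a - b) * ((a + b) * (s + t)) = 1).
  { replace ((a - b) * ((a + b) * (s + t))) with ((a * a - b * b) * (s + t)) by ring.
    rewrite Ea, Eb; nra. }
  assert (a <= s) by nra.
  assert (G : (a + b) * (s + t) <= 4 * (x + 1)).
  { apply Rle_trans with ((2 * a) * (2 * s)); [apply Rmult_le_compat|]; nra. }
  apply (Rmult_le_reg_r (x + 1)); [lra|]. rewrite Rinv_l by lra. nra.
Qed.

Lemma H_nat_le (n : nat) : H (INR n) <= 4 * sqrt (sqrt (INR n)).
Proof.
  induction n; [simpl; rewrite H_0, sqrt_0, sqrt_0; lra|].
  rewrite S_INR, H_add1 by apply pos_INR.
  assert (Hstep := inv_le_fourth_root_sub (INR n) (pos_INR n)). lra.
Qed.

Lemma H_sq_le (z : R) : 0 <= z -> H z ^ 2 <= 16 * sqrt (z + 1).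
Proof.
  intro Hz; destruct (nfloor_ex z Hz) as [p [Hp1 Hp2]].
  assert (Hle : H z <= H (INR (S p))) by (apply H_le; rewrite S_INR; lra).
  assert (Hn := H_nat_le (S p)); assert (Hg := H_nonneg z Hz).
  assert (Hroot : sqrt (sqrt (INR (S p))) <= sqrt (sqrt (z + 1)))
    by (apply sqrt_le_1_alt, sqrt_le_1_alt; rewrite S_INR; lra).
  assert (Esq : sqrt (sqrt (z + 1)) * sqrt (sqrt (z + 1)) = sqrt (z + 1))
    by (apply sqrt_sqrt, sqrt_pos).
  assert (Hpos : 0 <= sqrt (sqrt (INR (S p)))) by apply sqrt_pos.
  nra.
Qed.

Lemma is_lim_seq_H_sq_div (c : R) :
  0 < c -> is_lim_seq (fun n => H (INR n + c) ^ 2 / (INR n + c)) 0.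
Proof.
  intro Hc; apply is_lim_seq_incr_1.
  apply (is_lim_seq_le_le (fun _ => 0) _ (fun n => 16 * sqrt 2 * / sqrt (INR (S n) + c)));
    [|apply is_lim_seq_const|].
  - intro n; assert (Hn : 1 <= INR (S n)) by (apply (le_INR 1); lia).
    set (t := INR (S n) + c) in *; assert (Ht : 1 <= t) by (unfold t; lra).
    assert (Hb := H_sq_le t ltac:(lra)).
    assert (Hsqrt : sqrt (t + 1) <= sqrt 2 * sqrt t)
      by (rewrite <- sqrt_mult by lra; apply sqrt_le_1_alt; nra).
    assert (St : 0 < sqrt t) by (apply sqrt_lt_R0; lra).
    assert (Et : sqrt t * sqrt t = t) by (apply sqrt_sqrt; lra).
    split; [apply Rdiv_le_0_compat; [apply pow2_ge_0|lra]|].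
    apply (Rmult_le_reg_r t); [lra|]; unfold Rdiv; rewrite Rmult_assoc, Rinv_l by lra.
    replace (16 * sqrt 2 * / sqrt t * t) with (16 * (sqrt 2 * sqrt t))
      by (rewrite <- Et at 3; field; lra).
    nra.
  - replace (Finite 0) with (Rbar_mult (16 * sqrt 2) 0) by (simpl; f_equal; ring).
    apply is_lim_seq_scal_l, (is_lim_seq_incr_1 (fun n => / sqrt (INR n + c))).
    apply is_lim_seq_inv_sqrt_shift, Hc.
Qed.

Lemma is_lim_seq_H_div (c : R) :
  0 < c -> is_lim_seq (fun n => H (INR n + c) / (INR n + c)) 0.
Proof.
  intro Hc.
  apply (is_lim_seq_le_le (fun _ => 0) _
           (fun n => / (INR n + c) + H (INR n + c) ^ 2 / (INR n + c)));
    [|apply is_lim_seq_const|].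
  - intro n; assert (P := pos_INR n); assert (Hg := H_nonneg (INR n + c) ltac:(lra)).
    assert (Hinv : 0 < / (INR n + c)) by (apply Rinv_0_lt_compat; lra).
    unfold Rdiv; split; [nra|].
    assert (Hq : H (INR n + c) <= 1 + H (INR n + c) ^ 2) by nra. nra.
  - replace (Finite 0) with (Finite (0 + 0)) by (f_equal; ring).
    apply is_lim_seq_plus'; [apply is_lim_seq_inv_shift|apply is_lim_seq_H_sq_div]; exact Hc.
Qed.

Lemma H_INR_S_add (n : nat) (y : R) :
  0 <= y -> H (INR (S n) + y) = H (INR n + y) + / (INR (S n) + y).
Proof.
  intro Hy; assert (Pn : 0 <= INR n) by apply pos_INR.
  replace (INR (S n) + y) with (INR n + y + 1) by (rewrite S_INR; ring).
  apply H_add1; lra.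
Qed.

Definition Hpow_term (p : nat) (x : R) (m : nat) : R := H (INR m + x) ^ p * harm_term x m.

Definition Hpow_sum (p : nat) (x : R) : R := series (fun k => Hpow_term p x (S k)).

Lemma Hpow_term_nonneg (p : nat) (x : R) (m : nat) :
  0 <= x -> (1 <= m)%nat -> 0 <= Hpow_term p x m.
Proof.
  intros Hx Hm; unfold Hpow_term.
  assert (Pm : 0 <= INR m) by apply pos_INR.
  apply Rmult_le_pos; [apply pow_le, H_nonneg; lra|apply harm_term_bounds; auto].
Qed.

(* [H_z^2 = O(sqrt z)] makes the terms [O(m^(-3/2))]. *)
Lemma ex_Hpow2_sum (x : R) : 0 <= x -> exists l, is_sum1 (Hpow_term 2 x) l.
Proof.
  intro Hx.
  apply (ex_sum1_le _ (fun m => / (INR m * sqrt (INR m))) (16 * x * sqrt (x + 2)) 3);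
    [|intros m Hm; split|apply fsum1_inv_pow32_le].
  - assert (Hs : 0 <= sqrt (x + 2)) by apply sqrt_pos. apply Rmult_le_pos; lra.
  - apply Hpow_term_nonneg; auto.
  - unfold Hpow_term; assert (Hm1 : 1 <= INR m) by (apply (le_INR 1); lia).
    assert (Ht := harm_term_bounds x m Hx Hm); set (t := INR m) in *.
    assert (Hb := H_sq_le (t + x) ltac:(lra)).
    assert (Hsqrt : sqrt (t + x + 1) <= sqrt (x + 2) * sqrt t)
      by (rewrite <- sqrt_mult by lra; apply sqrt_le_1_alt; nra).
    assert (St : 0 < sqrt t) by (apply sqrt_lt_R0; lra).
    assert (Et : sqrt t * sqrt t = t) by (apply sqrt_sqrt; lra).
    apply Rle_trans with (16 * (sqrt (x + 2) * sqrt t) * (x * / t ^ 2)).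
    + apply Rmult_le_compat; nra.
    + right; rewrite <- Et at 2 3; field; lra.
Qed.

Lemma Hpow_is_sum1 (p : nat) (x : R) :
  (p <= 2)%nat -> 0 <= x -> is_sum1 (Hpow_term p x) (Hpow_sum p x).
Proof.
  intros Hp Hx; destruct (ex_Hpow2_sum x Hx) as [l2 Hl2].
  destruct (ex_sum1_bounded (Hpow_term p x) (H x + l2)) as [l Hl].
  - intros m Hm; apply Hpow_term_nonneg; auto.
  - intro n; apply Rle_trans with (fsum1 n (fun m => harm_term x m + Hpow_term 2 x m)).
    + apply fsum1_le; intros m Hm; unfold Hpow_term.
      assert (Hh := harm_term_bounds x m Hx Hm).
      assert (Pm : 0 <= INR m) by apply pos_INR.
      assert (Hg := H_nonneg (INR m + x) ltac:(lra)); set (h := H (INR m + x)) in *.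
      assert (Hhp : h ^ p <= 1 + h ^ 2)
        by (destruct p as [|[|[|p]]]; [simpl; nra|simpl; nra|lra|lia]).
      nra.
    + rewrite fsum1_plus; apply Rplus_le_compat; apply fsum1_le_is_sum1; auto.
      * intros m Hm; apply harm_term_bounds; auto.
      * apply H_is_sum1, Hx.
      * intros m Hm; apply Hpow_term_nonneg; auto.
  - replace (Hpow_sum p x) with l; [exact Hl|symmetry; exact (is_sum1_series _ _ Hl)].
Qed.

Lemma Hpow_sum1_0 : Hpow_sum 1 0 = 0.
Proof.
  apply (is_lim_seq_eq (fun n => fsum1 n (Hpow_term 1 0)));
    [apply Hpow_is_sum1; [lia|lra]|].
  eapply is_lim_seq_ext; [|apply is_lim_seq_const].
  intro n; induction n; simpl; [reflexivity|].
  rewrite <- IHn; unfold Hpow_term, harm_term; rewrite Rplus_0_r; ring.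
Qed.

Lemma Hpow_sum1_le (a b : R) : 0 <= a <= b -> Hpow_sum 1 a <= Hpow_sum 1 b.
Proof.
  intro Hab; apply (is_sum1_le (Hpow_term 1 a) (Hpow_term 1 b));
    try (apply Hpow_is_sum1; [lia|lra]).
  intros m Hm; unfold Hpow_term; assert (P := INR_pos_of_ge1 m Hm).
  assert (A := harm_term_bounds a m ltac:(lra) Hm).
  assert (Hab_term : harm_term a m <= harm_term b m).
  { unfold harm_term.
    assert (/ (INR m + b) <= / (INR m + a)) by (apply Rinv_le_contravar; lra). lra. }
  assert (HHab : H (INR m + a) <= H (INR m + b)) by (apply H_le; lra).
  assert (Hg := H_nonneg (INR m + a) ltac:(lra)).
  rewrite !pow_1; apply Rmult_le_compat; lra.
Qed.

Lemma Hpow_sum1_add1 (x : R) :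
  0 <= x -> Hpow_sum 1 (x + 1) - Hpow_sum 1 x = 2 * H (x + 1) / (x + 1).
Proof.
  intro Hx; set (y := x + 1); assert (Hy : 0 < y) by (unfold y; lra).
  assert (Hpart : forall n, fsum1 n (Hpow_term 1 y) - fsum1 n (Hpow_term 1 x) =
                   / y * fsum1 n (harm_term y) - H (INR n + y) / (INR n + y) + H y / y).
  { induction n; [simpl; rewrite Rplus_0_l; field; lra|].
    rewrite !fsum1_S.
    replace (fsum1 n (Hpow_term 1 y) + Hpow_term 1 y (S n)
             - (fsum1 n (Hpow_term 1 x) + Hpow_term 1 x (S n)))
      with ((fsum1 n (Hpow_term 1 y) - fsum1 n (Hpow_term 1 x))
            + (Hpow_term 1 y (S n) - Hpow_term 1 x (S n))) by ring.
    rewrite IHn; unfold Hpow_term, harm_term.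
    replace (INR (S n) + x) with (INR n + y) by (unfold y; rewrite S_INR; ring).
    rewrite (H_INR_S_add n y) by lra.
    assert (Pn : 0 <= INR n) by apply pos_INR.
    rewrite S_INR; field; repeat split; lra. }
  apply (is_lim_seq_eq (fun n => fsum1 n (Hpow_term 1 y) - fsum1 n (Hpow_term 1 x))).
  - apply is_lim_seq_minus'; apply Hpow_is_sum1; lia || lra.
  - eapply is_lim_seq_ext; [intro n; symmetry; apply Hpart|].
    replace (2 * H y / y) with (/ y * H y - 0 + H y / y) by (field; lra).
    apply is_lim_seq_plus'; [|apply is_lim_seq_const].
    apply is_lim_seq_minus'; [|apply is_lim_seq_H_div, Hy].
    apply (is_lim_seq_scal_l _ (/ y) (H y)), H_is_sum1; lra.
Qed.

Lemma Rabs_sub_le_of_bracket (f g : R -> R) (a y b : R) :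
  f a = g a -> f b = g b -> f a <= f y <= f b -> g a <= g y <= g b ->
  Rabs (f y - g y) <= g b - g a.
Proof. intros; apply Rabs_le; lra. Qed.

Definition Hsq_Hm2 (x : R) : R := H x ^ 2 + Hm 2 x.

Lemma Hsq_Hm2_add1 (x : R) :
  0 <= x -> Hsq_Hm2 (x + 1) - Hsq_Hm2 x = 2 * H (x + 1) / (x + 1).
Proof. intro Hx; unfold Hsq_Hm2; rewrite H_add1, Hm2_add1 by exact Hx; field; lra. Qed.

Lemma Hsq_Hm2_le (a b : R) : 0 <= a <= b -> Hsq_Hm2 a <= Hsq_Hm2 b.
Proof.
  intro Hab; unfold Hsq_Hm2.
  assert (A := H_le a b Hab); assert (B := Hm2_le a b Hab).
  assert (C := H_nonneg a ltac:(lra)). nra.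
Qed.

Lemma Hpow_sum1_sub_Hsq_Hm2_add_nat (x : R) (n : nat) : 0 <= x ->
  Hpow_sum 1 (x + INR n) - Hsq_Hm2 (x + INR n) = Hpow_sum 1 x - Hsq_Hm2 x.
Proof.
  intro Hx; induction n; [simpl; rewrite Rplus_0_r; reflexivity|].
  rewrite S_INR, <- IHn; replace (x + (INR n + 1)) with (x + INR n + 1) by ring.
  assert (Pn := pos_INR n).
  assert (A := Hpow_sum1_add1 (x + INR n) ltac:(lra)).
  assert (B := Hsq_Hm2_add1 (x + INR n) ltac:(lra)). lra.
Qed.

(* Both sides grow by [2 H_(x+1) / (x+1)] from [x] to [x + 1] and vanish at [0]: their
   difference is 1-periodic and zero at the integers, and since both are nondecreasing it is
   bounded on [[n, n+1]] by that step, which tends to 0. *)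
Lemma Hpow_sum1_eq (x : R) : 0 <= x -> Hpow_sum 1 x = Hsq_Hm2 x.
Proof.
  intro Hx.
  assert (Dnat : forall n, Hpow_sum 1 (INR n) = Hsq_Hm2 (INR n)).
  { intro n; assert (D := Hpow_sum1_sub_Hsq_Hm2_add_nat 0 n ltac:(lra)).
    rewrite Rplus_0_l, Hpow_sum1_0 in D; unfold Hsq_Hm2 in *.
    rewrite H_0, Hm2_0 in D; lra. }
  destruct (nfloor_ex x Hx) as [p [Hp1 Hp2]].
  assert (Hbound : forall N, Rabs (Hpow_sum 1 x - Hsq_Hm2 x) <=
                     2 * (H (INR N + (INR p + 1)) / (INR N + (INR p + 1)))).
  { intro N; assert (PN := pos_INR N); assert (Pp := pos_INR p).
    rewrite <- (Hpow_sum1_sub_Hsq_Hm2_add_nat x N Hx).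
    replace (2 * (H (INR N + (INR p + 1)) / (INR N + (INR p + 1))))
      with (Hsq_Hm2 (INR (N + p) + 1) - Hsq_Hm2 (INR (N + p)))
      by (rewrite Hsq_Hm2_add1 by apply pos_INR; rewrite plus_INR, Rplus_assoc; field; lra).
    apply (Rabs_sub_le_of_bracket (Hpow_sum 1) Hsq_Hm2); rewrite ?plus_INR in *.
    - rewrite <- plus_INR; apply Dnat.
    - rewrite <- plus_INR, <- S_INR; apply Dnat.
    - split; apply Hpow_sum1_le; lra.
    - split; apply Hsq_Hm2_le; lra. }
  assert (Hlim : Rabs (Hpow_sum 1 x - Hsq_Hm2 x) <= 0).
  { change (Rbar_le (Rabs (Hpow_sum 1 x - Hsq_Hm2 x)) 0).
    apply (is_lim_seq_le _ _ _ _ Hbound); [apply is_lim_seq_const|].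
    replace (Finite 0) with (Rbar_mult 2 0) by (simpl; f_equal; ring).
    apply is_lim_seq_scal_l, is_lim_seq_H_div; assert (Pp := pos_INR p); lra. }
  assert (Hle := Rle_abs (Hpow_sum 1 x - Hsq_Hm2 x)).
  assert (Hge := Rle_abs (- (Hpow_sum 1 x - Hsq_Hm2 x))); rewrite Rabs_Ropp in Hge.
  lra.
Qed.

Lemma Hpow_sum2_partial_sub (y : R) (n : nat) : 1 <= y ->
  fsum1 n (Hpow_term 2 y) - fsum1 n (Hpow_term 2 (y - 1)) =
  2 / y * fsum1 n (Hpow_term 1 (y - 1)) + / y ^ 2 * fsum1 n (harm_term y)
  + / y * fsum1 n (fun m => / (INR m + y) ^ 2) + 2 * H y / y ^ 2 + H y ^ 2 / y
  - 2 / y * (H (INR n + y) / (INR n + y)) - H (INR n + y) ^ 2 / (INR n + y).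
Proof.
  intro Hy; induction n; [simpl; rewrite Rplus_0_l; field; lra|].
  rewrite !fsum1_S.
  replace (fsum1 n (Hpow_term 2 y) + Hpow_term 2 y (S n)
           - (fsum1 n (Hpow_term 2 (y - 1)) + Hpow_term 2 (y - 1) (S n)))
    with ((fsum1 n (Hpow_term 2 y) - fsum1 n (Hpow_term 2 (y - 1)))
          + (Hpow_term 2 y (S n) - Hpow_term 2 (y - 1) (S n))) by ring.
  rewrite IHn; unfold Hpow_term, harm_term.
  replace (INR (S n) + (y - 1)) with (INR n + y) by (rewrite S_INR; ring).
  rewrite (H_INR_S_add n y) by lra.
  assert (Pn : 0 <= INR n) by apply pos_INR.
  rewrite S_INR; field; repeat split; lra.
Qed.

Definition Hcubic (z : R) : R := H z ^ 3 + H z * Hm 2 z + H z * zeta 2.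

Lemma Hpow_sum2_add1 (x : R) : 0 <= x ->
  Hpow_sum 2 (x + 1) - Hpow_sum 2 x = Hcubic (x + 1) - Hcubic x + H (x + 1) / (x + 1) ^ 2.
Proof.
  intro Hx; set (y := x + 1); assert (Hy : 1 <= y) by (unfold y; lra).
  replace (Hpow_sum 2 x) with (Hpow_sum 2 (y - 1)) by (unfold y; f_equal; ring).
  assert (Hlim : Hpow_sum 2 y - Hpow_sum 2 (y - 1) =
    2 / y * Hpow_sum 1 (y - 1) + / y ^ 2 * H y + / y * (zeta 2 - Hm 2 y)
    + 2 * H y / y ^ 2 + H y ^ 2 / y - 2 / y * 0 - 0).
  { apply (is_lim_seq_eq (fun n => fsum1 n (Hpow_term 2 y) - fsum1 n (Hpow_term 2 (y - 1)))).
    { apply is_lim_seq_minus'; apply Hpow_is_sum1; lia || lra. }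
    eapply is_lim_seq_ext; [intro n; symmetry; apply Hpow_sum2_partial_sub, Hy|].
    apply is_lim_seq_minus'; [apply is_lim_seq_minus'|apply is_lim_seq_H_sq_div; lra].
    - apply is_lim_seq_plus'; [apply is_lim_seq_plus'; [|apply is_lim_seq_const]|
                               apply is_lim_seq_const].
      apply is_lim_seq_plus'; [apply is_lim_seq_plus'|].
      + apply (is_lim_seq_scal_l _ (2 / y) (Hpow_sum 1 (y - 1))), Hpow_is_sum1; lia || lra.
      + apply (is_lim_seq_scal_l _ (/ y ^ 2) (H y)), H_is_sum1; lra.
      + apply (is_lim_seq_scal_l _ (/ y) (zeta 2 - Hm 2 y)), inv_sq_shift_is_sum1; lra.
    - apply (is_lim_seq_scal_l _ (2 / y) 0), is_lim_seq_H_div; lra. }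
  rewrite Hlim, Hpow_sum1_eq by lra.
  replace (y - 1) with x by (unfold y; ring).
  unfold Hsq_Hm2, Hcubic, y; rewrite H_add1, Hm2_add1 by exact Hx.
  field; lra.
Qed.

Lemma Hpow_sum2_telescope (x : R) (d : nat) : 0 <= x ->
  Hpow_sum 2 (x + INR d) - Hpow_sum 2 x =
  Hcubic (x + INR d) - Hcubic x + fsum1 d (fun j => H (x + INR j) / (x + INR j) ^ 2).
Proof.
  intro Hx; induction d; [simpl; rewrite Rplus_0_r; ring|].
  rewrite fsum1_S, S_INR; replace (x + (INR d + 1)) with (x + INR d + 1) by ring.
  assert (Pd := pos_INR d).
  assert (Hstep := Hpow_sum2_add1 (x + INR d) ltac:(lra)). lra.
Qed.

Lemma fsum1_Hpow_term2 (alpha s : R) (n : nat) : 0 < alpha - s ->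
  fsum1 n (Hpow_term 2 (alpha - s)) =
  (alpha - s) * fsum1 n (fun j => H (alpha + INR j - s) ^ 2 / (INR j * (alpha + INR j - s))).
Proof.
  intro Hs; rewrite <- fsum1_scal_l; apply fsum1_ext; intros j Hj.
  assert (Pj := INR_pos_of_ge1 j Hj); unfold Hpow_term, harm_term.
  replace (INR j + (alpha - s)) with (alpha + INR j - s) by ring.
  field; split; lra.
Qed.

(* [1 / ((m+r)(m+k)) = (1/(m+r) - 1/(m+k)) / (k-r)], with [1/(m+alpha)] added and subtracted. *)
Lemma fsum1_Hsq_partial_fraction (r k : nat) (alpha : R) (n : nat) : 0 <= alpha ->
  (INR k - INR r) * fsum1 n (fun m => H (INR m + alpha) ^ 2 / ((INR m + INR r) * (INR m + INR k)))
  = fsum1 (n + r) (Hpow_term 2 (alpha - INR r)) - fsum1 (n + k) (Hpow_term 2 (alpha - INR k))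
    + fsum1 k (Hpow_term 2 (alpha - INR k)) - fsum1 r (Hpow_term 2 (alpha - INR r)).
Proof.
  intro Ha; induction n; [simpl; ring|].
  rewrite !Nat.add_succ_l, !fsum1_S, Rmult_plus_distr_l, IHn.
  unfold Hpow_term, harm_term.
  replace (INR (S (n + r)) + (alpha - INR r)) with (INR (S n) + alpha)
    by (rewrite !S_INR, plus_INR; ring).
  replace (INR (S (n + k)) + (alpha - INR k)) with (INR (S n) + alpha)
    by (rewrite !S_INR, plus_INR; ring).
  assert (Pn := pos_INR n); assert (Pr := pos_INR r); assert (Pk := pos_INR k).
  rewrite !S_INR, !plus_INR; field; repeat split; lra.
Qed.

Lemma is_sum1_Hsq_partial_fraction (r k : nat) (alpha : R) :
  (r < k)%nat -> INR k < alpha ->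
  is_sum1 (fun m => H (INR m + alpha) ^ 2 / ((INR m + INR r) * (INR m + INR k)))
    ((Hpow_sum 2 (alpha - INR r) - Hpow_sum 2 (alpha - INR k)
      + fsum1 k (Hpow_term 2 (alpha - INR k)) - fsum1 r (Hpow_term 2 (alpha - INR r)))
     / (INR k - INR r)).
Proof.
  intros Hrk Hka; assert (Hlt : INR r < INR k) by (apply lt_INR, Hrk).
  assert (Pr := pos_INR r).
  set (b := alpha - INR r); set (c := alpha - INR k).
  apply (is_lim_seq_ext (fun n => / (INR k - INR r) *
    (fsum1 (n + r) (Hpow_term 2 b) - fsum1 (n + k) (Hpow_term 2 c)
     + fsum1 k (Hpow_term 2 c) - fsum1 r (Hpow_term 2 b)))).
  { intro n; unfold b, c; rewrite <- fsum1_Hsq_partial_fraction by lra; field; lra. }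
  replace (_ / (INR k - INR r)) with
    (/ (INR k - INR r) * (Hpow_sum 2 b - Hpow_sum 2 c
       + fsum1 k (Hpow_term 2 c) - fsum1 r (Hpow_term 2 b))) by (field; lra).
  apply (is_lim_seq_scal_l _ _ (_ - _ + _ - _)).
  apply is_lim_seq_minus'; [|apply is_lim_seq_const].
  apply is_lim_seq_plus'; [|apply is_lim_seq_const].
  apply is_lim_seq_minus';
    [apply (is_lim_seq_incr_n (fun n => fsum1 n (Hpow_term 2 b)))
    |apply (is_lim_seq_incr_n (fun n => fsum1 n (Hpow_term 2 c)))];
    apply Hpow_is_sum1; unfold b, c; lia || lra.
Qed.

Theorem corollary2p8 (r k : nat) (alpha : R)
  (hrk : (r < k)%nat) (hka : INR k < alpha) :
  infinite_sum
    (fun n => (H (INR (S n) + alpha)) ^ 2 /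
              ((INR (S n) + INR r) * (INR (S n) + INR k)))
    (/ (INR k - INR r) *
      ( (H (alpha - INR r)) ^ 3
        + H (alpha - INR r) * Hm 2 (alpha - INR r)
        + H (alpha - INR r) * zeta 2
        - (H (alpha - INR k)) ^ 3
        - H (alpha - INR k) * Hm 2 (alpha - INR k)
        - H (alpha - INR k) * zeta 2
        + (INR r - alpha) *
            fsum1 r (fun j => (H (alpha + INR j - INR r)) ^ 2 /
                              (INR j * (alpha + INR j - INR r)))
        + fsum1 (k - r) (fun j => H (alpha + INR j - INR k) /
                                  (alpha + INR j - INR k) ^ 2)
        - (INR k - alpha) *
            fsum1 k (fun j => (H (alpha + INR j - INR k)) ^ 2 /
                              (INR j * (alpha + INR j - INR k))) )).
Proof.
  assert (Hlt : INR r < INR k) by (apply lt_INR, hrk).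
  assert (Pr := pos_INR r).
  refine (eq_rect _ (infinite_sum _)
            (is_sum1_infinite_sum _ _ (is_sum1_Hsq_partial_fraction r k alpha hrk hka)) _ _).
  rewrite !fsum1_Hpow_term2 by lra.
  assert (Htel := Hpow_sum2_telescope (alpha - INR k) (k - r) ltac:(lra)).
  replace (alpha - INR k + INR (k - r)) with (alpha - INR r) in Htel
    by (rewrite minus_INR by lia; ring).
  rewrite Htel.
  replace (fsum1 (k - r) (fun j => H (alpha - INR k + INR j) / (alpha - INR k + INR j) ^ 2))
    with (fsum1 (k - r) (fun j => H (alpha + INR j - INR k) / (alpha + INR j - INR k) ^ 2))
    by (apply fsum1_ext; intros j _; replace (alpha - INR k + INR j) with (alpha + INR j - INR k) by ring; reflexivity).
  unfold Hcubic; field; lra.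
Qed.
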